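(* Let $(X,Y)$ be any one of the pairs $(F,L)$, $(L,F)$, $(J,j)$, $(j,J)$, $(P,Q)$, $(Q,P)$. For integers $a,b,c,d,e$ put $$\Delta_{xy}=X_{d-a}Y_{e-b}-X_{e-a}Y_{d-b},\quad \Delta_1=X_{d-c}Y_{e-b}-X_{e-c}Y_{d-b},\quad \Delta_2=X_{d-a}X_{e-c}-X_{e-a}X_{d-c}.$$ Then for all integers $k,m$, provided $\Delta_1\neq0$, $\Delta_2\neq0$ and (when $k<0$) $\Delta_{xy}\neq0$, $$\sum_{r=0}^k\left(\frac{\Delta_{xy}}{\Delta_1}\right)^rY_{m-k(a-c)-b+c+(a-c)r}=\frac{\Delta_{xy}}{\Delta_2}\left(\frac{\Delta_{xy}}{\Delta_1}\right)^kX_m-\frac{\Delta_1}{\Delta_2}X_{m-(k+1)(a-c)}.$$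
   Context: All sequences are indexed by $n\in\mathbb Z$. Fibonacci numbers $F_n$ and Lucas numbers $L_n$: $F_n=F_{n-1}+F_{n-2}$, $L_n=L_{n-1}+L_{n-2}$ for all $n\in\mathbb Z$, with $F_0=0,F_1=1,L_0=2,L_1=1$ (so $F_{-n}=(-1)^{n-1}F_n$, $L_{-n}=(-1)^nL_n$). Jacobsthal numbers $J_n$ and Jacobsthal–Lucas numbers $j_n$: $J_n=J_{n-1}+2J_{n-2}$, $j_n=j_{n-1}+2j_{n-2}$ for all $n\in\mathbb Z$, with $J_0=0,J_1=1,j_0=2,j_1=1$ (so $J_{-n}=(-1)^{n-1}2^{-n}J_n$, $j_{-n}=(-1)^n2^{-n}j_n$, rational for negative index). Pell numbers $P_n$ and Pell–Lucas numbers $Q_n$: $P_n=2P_{n-1}+P_{n-2}$, $Q_n=2Q_{n-1}+Q_{n-2}$ for all $n\in\mathbb Z$, with $P_0=0,P_1=1,Q_0=2,Q_1=2$ (so $P_{-n}=(-1)^{n-1}P_n$, $Q_{-n}=(-1)^nQ_n$). Summation convention: for an integer $k<0$, $\sum_{r=0}^k f_r$ means $-\sum_{r=k+1}^{-1} f_r$ (in particular it equals $0$ when $k=-1$). *)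

From HB Require Import structures.
From mathcomp Require Import all_boot all_order all_algebra.
Set Implicit Arguments. Unset Strict Implicit. Unset Printing Implicit Defensive.
Import Order.TTheory GRing.Theory Num.Theory.
Local Open Scope ring_scope.

(* Second-order recurrence W_n = p W_{n-1} + q W_{n-2} with W_0 = a0, W_1 = a1,
   extended to all n in Z (q <> 0 in all our instances). *)
(* fwd n = (W_n, W_{n+1}) for n >= 0 *)
Fixpoint rec_fwd (p q a0 a1 : rat) (n : nat) : rat * rat :=
  match n with
  | O => (a0, a1)
  | S n' => let: (x, y) := rec_fwd p q a0 a1 n' in (y, p * y + q * x)
  end.

(* bwd n = (W_{-n}, W_{-n+1}) for n >= 0, using W_{n-2} = (W_n - p W_{n-1}) / q *)
Fixpoint rec_bwd (p q a0 a1 : rat) (n : nat) : rat * rat :=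
  match n with
  | O => (a0, a1)
  | S n' => let: (x, y) := rec_bwd p q a0 a1 n' in ((y - p * x) / q, x)
  end.

Definition recseq (p q a0 a1 : rat) (z : int) : rat :=
  match z with
  | Posz n => (rec_fwd p q a0 a1 n).1
  | Negz n => (rec_bwd p q a0 a1 n.+1).1   (* Negz n = -(n+1) *)
  end.

Definition Fib   : int -> rat := recseq 1 1 0 1.
Definition Luc   : int -> rat := recseq 1 1 2 1.
Definition Jac   : int -> rat := recseq 1 2 0 1.
Definition JacL  : int -> rat := recseq 1 2 2 1.
Definition Pell  : int -> rat := recseq 2 1 0 1.
Definition PellL : int -> rat := recseq 2 1 2 2.

(* Summation convention: for k >= 0, sum_{r=0}^k f r;
   for k < 0, - sum_{r=k+1}^{-1} f r. *)
Definition zsum (f : int -> rat) (k : int) : rat :=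
  match k with
  | Posz n => \sum_(i < n.+1) f (Posz i)
  | Negz n => - \sum_(i < n) f (- Posz i.+1)   (* k = -(n+1); r = -1, ..., -n *)
  end.

(* Shifts of solutions of one second-order linear recurrence span a
   two-dimensional space, so among the three sequences X(n - a), X(n - c) and
   Y(n - b) there is a linear relation, whose coefficients are the 2x2 minors
   read off at n = d and n = e: D2 Y(n - b) = Dxy X(n - c) - D1 X(n - a).  With rho = Dxy / D1 the r-th
   summand then becomes (D1 / D2) (G(r + 1) - G r) for
   G r = rho^r X(m - (k + 1 - r)(a - c)), and the sum telescopes. *)

From HB Require Import structures.
From mathcomp Require Import all_boot all_order all_algebra.
From mathcomp Require Import ring.
Import Order.TTheory GRing.Theory Num.Theory.
Local Open Scope ring_scope.
Set Implicit Arguments.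

Definition linrec (p q : rat) (W : int -> rat) :=
  forall n : int, W (n + 2) = p * W (n + 1) + q * W n.

Lemma oppzS_addr1 (n : nat) : - n.+1%:Z + 1 = - n%:Z.
Proof. by rewrite -addn1 PoszD opprD addrNK. Qed.

Lemma recseq_oppz p q a0 a1 (n : nat) :
  recseq p q a0 a1 (- n%:Z) = (rec_bwd p q a0 a1 n).1.
Proof. by case: n. Qed.

Lemma recseq_oppzS p q a0 a1 (n : nat) :
  recseq p q a0 a1 (- n%:Z + 1) = (rec_bwd p q a0 a1 n).2.
Proof.
case: n => [|n] //.
by rewrite oppzS_addr1 recseq_oppz /=; case: (rec_bwd p q a0 a1 n).
Qed.

Lemma linrec_recseq p q a0 a1 : q != 0 -> linrec p q (recseq p q a0 a1).
Proof.
move=> q_neq0 [] n.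
- have -> : n%:Z + 2 = n.+2 by rewrite -PoszD addn2.
  have -> : n%:Z + 1 = n.+1 by rewrite -PoszD addn1.
  by rewrite /=; case: (rec_fwd p q a0 a1 n).
- have n1E : Negz n + 1 = - n%:Z by rewrite NegzE oppzS_addr1.
  have n2E : Negz n + 2 = - n%:Z + 1 by rewrite -n1E -addrA.
  rewrite n2E n1E NegzE recseq_oppzS !recseq_oppz /=.
  by case: (rec_bwd p q a0 a1 n) => x y /=; field.
Qed.

Lemma linrec_eq0 p q W : q != 0 -> linrec p q W -> W 0 = 0 -> W 1 = 0 ->
  forall n, W n = 0.
Proof.
move=> q_neq0 recW W0 W1.
have fwd (n : nat) : W n = 0 /\ W n.+1 = 0.
  elim: n => [|n [IHn IHn1]] //; split => //.
  by rewrite -addn2 PoszD recW -PoszD addn1 IHn IHn1 !mulr0 addr0.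
have bwd (n : nat) : W (- n%:Z) = 0 /\ W (- n%:Z + 1) = 0.
  elim: n => [|n [IHn IHn1]]; first by rewrite oppr0.
  split; last by rewrite oppzS_addr1.
  have := recW (- n.+1%:Z).
  have -> : - n.+1%:Z + 2 = - n%:Z + 1 by rewrite -(oppzS_addr1 n) -addrA.
  rewrite oppzS_addr1 IHn IHn1 mulr0 add0r => /esym/eqP.
  by rewrite mulf_eq0 (negPf q_neq0) => /eqP.
by case=> n; [case: (fwd n) | rewrite NegzE; case: (bwd n.+1)].
Qed.

Lemma linrec_span p q W : q != 0 -> linrec p q W ->
  exists A B, forall n, W n = A * recseq p q 1 0 n + B * recseq p q 0 1 n.
Proof.
move=> q_neq0 recW; exists (W 0), (W 1).
pose E n := W n - (W 0 * recseq p q 1 0 n + W 1 * recseq p q 0 1 n).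
have recE : linrec p q E by move=> n; rewrite /E recW !linrec_recseq //; ring.
have E0 : E 0 = 0 by rewrite /E /=; ring.
have E1 : E 1 = 0 by rewrite /E /=; ring.
move=> n; apply/eqP; rewrite -subr_eq0; apply/eqP.
exact: (linrec_eq0 q_neq0 recE E0 E1 n).
Qed.

Lemma linrec_shift p q W a : linrec p q W -> linrec p q (fun n => W (n - a)).
Proof. by move=> recW n /=; rewrite addrAC recW addrAC. Qed.

Lemma linrec_relation p q X Y (a b c d e : int) :
  q != 0 -> linrec p q X -> linrec p q Y ->
  forall n,
  (X (d - a) * X (e - c) - X (e - a) * X (d - c)) * Y (n - b) =
  (X (d - a) * Y (e - b) - X (e - a) * Y (d - b)) * X (n - c) -
  (X (d - c) * Y (e - b) - X (e - c) * Y (d - b)) * X (n - a).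
Proof.
move=> q_neq0 recX recY n.
have [A1 [B1 XaE]] := linrec_span q_neq0 (linrec_shift a recX).
have [A2 [B2 XcE]] := linrec_span q_neq0 (linrec_shift c recX).
have [A3 [B3 YbE]] := linrec_span q_neq0 (linrec_shift b recY).
by rewrite !XaE !XcE !YbE; ring.
Qed.

Lemma exprzSr (R : fieldType) (x : R) (r : int) :
  0 <= r \/ x != 0 -> x ^ (r + 1) = x ^ r * x.
Proof.
case=> [|x_neq0]; last by rewrite expfzDr ?expr1z.
by case: r => // n _; rewrite -PoszD addn1 exprSzr.
Qed.

(* [(0 <= r) = (0 <= k)] holds on the whole summation range of [zsum f k]. *)
Lemma zsum_telescope (f G : int -> rat) (k : int) :
  (forall r, (0 <= r) = (0 <= k) -> f r = G (r + 1) - G r) ->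
  zsum f k = G (k + 1) - G 0.
Proof.
case: k => n fE /=.
- under eq_bigr => i _ do rewrite fE // -PoszD addn1.
  rewrite -(big_mkord xpredT (fun i => G i.+1 - G i)) telescope_sumr //.
  by rewrite -PoszD addn1.
- rewrite NegzE oppzS_addr1.
  under eq_bigr => i _ do rewrite fE // oppzS_addr1.
  rewrite -(big_mkord xpredT (fun i => G (- i%:Z) - G (- i.+1%:Z))) -sumrN.
  under eq_bigr => i _ do rewrite opprB.
  by rewrite telescope_sumr.
Qed.

Lemma zsum_geometric_shift (X Y : int -> rat) (Dxy D1 D2 : rat) (a b c k m : int) :
  D1 != 0 -> D2 != 0 -> (k < 0 -> Dxy != 0) ->
  (forall n, D2 * Y (n - b) = Dxy * X (n - c) - D1 * X (n - a)) ->
  zsum (fun r => (Dxy / D1) ^ r * Y (m - k * (a - c) - b + c + (a - c) * r)) k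
  = Dxy / D2 * (Dxy / D1) ^ k * X m - D1 / D2 * X (m - (k + 1) * (a - c)).
Proof.
move=> D1_neq0 D2_neq0 Dxy_neq0 relXY.
set rho := Dxy / D1; set t := a - c.
have rhoS r : (0 <= r) = (0 <= k) -> rho ^ (r + 1) = rho ^ r * rho.
  move=> r_k; apply: exprzSr; case: (leP 0 k) => [k_ge0|/Dxy_neq0 ?].
    by left; rewrite r_k.
  by right; rewrite mulf_neq0 ?invr_eq0.
have rhoD1 : rho * D1 = Dxy by rewrite mulfVK.
pose G r := D1 / D2 * (rho ^ r * X (m - (k + 1 - r) * t)).
rewrite (@zsum_telescope _ G) => [|r r_k].
- rewrite /G subrr mul0r !subr0 expr0z mul1r rhoS // -rhoD1.
  by field.
- rewrite /G /=; pose n := m - k * t + c + t * r.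
  have -> : m - k * t - b + c + t * r = n - b by rewrite /n; ring.
  have YE : Y (n - b) = (Dxy * X (n - c) - D1 * X (n - a)) / D2.
    by rewrite -relXY mulrC mulKf.
  have -> : m - (k + 1 - (r + 1)) * t = n - c by rewrite /n /t; ring.
  have -> : m - (k + 1 - r) * t = n - a by rewrite /n /t; ring.
  by rewrite YE rhoS // -rhoD1; field.
Qed.

Theorem theorem4 (X Y : int -> rat)
  (HXY : (X = Fib /\ Y = Luc) \/ (X = Luc /\ Y = Fib) \/
         (X = Jac /\ Y = JacL) \/ (X = JacL /\ Y = Jac) \/
         (X = Pell /\ Y = PellL) \/ (X = PellL /\ Y = Pell))
  (a b c d e k m : int) :
  let Dxy := X (d - a) * Y (e - b) - X (e - a) * Y (d - b) in
  let D1 := X (d - c) * Y (e - b) - X (e - c) * Y (d - b) in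
  let D2 := X (d - a) * X (e - c) - X (e - a) * X (d - c) in
  D1 != 0 -> D2 != 0 -> (k < 0 -> Dxy != 0) ->
  zsum (fun r => (Dxy / D1) ^ r * Y (m - k * (a - c) - b + c + (a - c) * r)) k
  = Dxy / D2 * (Dxy / D1) ^ k * X m - D1 / D2 * X (m - (k + 1) * (a - c)).
Proof.
have [p [q [q_neq0 [recX recY]]]] :
    exists p q, q != 0 /\ linrec p q X /\ linrec p q Y.
  case: HXY => [[-> ->]|[[-> ->]|[[-> ->]|[[-> ->]|[[-> ->]|[-> ->]]]]]];
  [exists 1, 1|exists 1, 1|exists 1, 2|exists 1, 2|exists 2, 1|exists 2, 1];
  by split; [|split; apply: linrec_recseq].
move=> Dxy D1 D2 D1_neq0 D2_neq0 Dxy_neq0.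
apply: zsum_geometric_shift => //.
by move=> n; rewrite (linrec_relation a b c d e q_neq0 recX recY).
Qed.
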